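(* Let $n\geq1$, $\beta>0$, and let $f(\xi)\in\mathbb{Z}_p[\xi_1,\ldots,\xi_n]$ be an elliptic polynomial of degree $d$. Let $A=\{\xi\in\mathbb{Z}_p^n: |\xi_i|_p=1\text{ for some }i\}$ and let $M$ be a positive integer such that $|f(\xi)|_p\geq p^{-M}$ for all $\xi\in A$. For $t>0$ and $x\in\mathbb{Q}_p^n$ put $Z_0(x,t)=\int_{\mathbb{Z}_p^n}\Psi(x\cdot\xi)e^{-t|f(\xi)|_p^{\beta}}\,d\xi$. Then there exist constants $R>0$ and $C>0$ such that whenever $\|x\|_p\geq R$, $t>0$ and $p^{(M+1)d\beta}\,t\,\|x\|_p^{-d\beta}\leq1$, one has \[ |Z_0(x,t)|\leq C\,t\,\|x\|_p^{-d\beta-n}. \]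
   Context: $\mathbb{Q}_p$ is the field of $p$-adic numbers, $\mathbb{Z}_p$ its ring of integers, $|\cdot|_p$ the $p$-adic absolute value, $\|x\|_p=\max_i|x_i|_p$. $d\xi$ is the Haar measure on $\mathbb{Q}_p^n$ with $\mathbb{Z}_p^n$ of measure $1$. $\Psi$ is the standard additive character of $\mathbb{Q}_p$, $\Psi(a)=\exp(2\pi i\{a\}_p)$ where $\{a\}_p$ is the fractional part of $a$, and $x\cdot\xi=\sum_i x_i\xi_i$. A polynomial $f\in\mathbb{Q}_p[\xi_1,\dots,\xi_n]$ is elliptic of degree $d$ if it is a non-constant homogeneous polynomial of degree $d$ and $f(\xi)=0\iff\xi=0$. *)

From mathcomp Require Import all_boot all_order all_algebra.
From mathcomp Require Import all_classical all_reals all_analysis.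
Set Implicit Arguments. Unset Strict Implicit. Unset Printing Implicit Defensive.
Import Order.TTheory GRing.Theory Num.Theory numFieldNormedType.Exports.
Local Open Scope classical_set_scope.
Local Open Scope ring_scope.

(* ---------- p-adic integers: compatible systems of residues ----------
   an element a of Z_p is given by its residues  padic_res a k = a mod p^k
   (in [0, p^k)), compatible:  (a mod p^(k+1)) mod p^k = a mod p^k.      *)
Record padic_int (p : nat) := PadicInt {
  padic_res : nat -> nat ;
  padic_res_compat : forall k, (padic_res k.+1 %% p ^ k = padic_res k)%N }.

Lemma pint_of_nat_compat (p a : nat) k :
  ((a %% p ^ k.+1) %% p ^ k = a %% p ^ k)%N.
Proof. apply: modn_dvdm; exact: dvdn_exp2l (leqnSn k). Qed.

Definition pint_of_nat (p a : nat) : padic_int p :=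
  @PadicInt p (fun k => a %% p ^ k)%N (pint_of_nat_compat p a).

Definition padic_abs_res {R : realType} (p : nat) (r : nat -> nat) : R :=
  inf ((fun k : nat => (p%:R : R) ^- k) @` [set k | r k = 0%N]).

(* ---------- p-adic numbers ----------
   a pair (m, y) represents the p-adic number p^{-m} * y, y in Z_p.
   (Every element of Q_p has such representations.) *)
Definition padic_num (p : nat) := (nat * padic_int p)%type.

Definition padic_abs_num {R : realType} (p : nat) (x : padic_num p) : R :=
  (p%:R : R) ^+ x.1 * padic_abs_res p (padic_res x.2).

Definition padic_vnorm {R : realType} (p n : nat) (x : 'I_n -> padic_num p) : R :=
  \big[Num.max/0]_(i < n) padic_abs_num (R:=R) (x i).

(* ---------- polynomials in Z_p[xi_1..xi_n] ----------
   a polynomial is a finite list of terms (alpha, c) standing for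
   c * xi^alpha, alpha : 'I_n -> nat a multi-index, c in Z_p. *)
Definition zpoly (p n : nat) := seq (('I_n -> nat) * padic_int p).

Definition mdeg (n : nat) (alpha : 'I_n -> nat) : nat := (\sum_(i < n) alpha i)%N.

Definition zpoly_eval_res (p n : nat) (f : zpoly p n) (xi : 'I_n -> padic_int p)
  (k : nat) : nat :=
  ((\sum_(t <- f) padic_res t.2 k * \prod_(i < n) padic_res (xi i) k ^ t.1 i)
     %% p ^ k)%N.

(* With M = max m_i and
   D = max total degree of the terms of f,
     f(x) = p^{-M D} * sum_t c_t p^{M D - sum_i m_i alpha_i} prod_i y_i^{alpha_i},
   and the last sum lies in Z_p; these are its residues mod p^k. *)
Definition zpoly_qeval_res (p n : nat) (f : zpoly p n) (x : 'I_n -> padic_num p)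
  (k : nat) : nat :=
  let M := (\max_(i < n) (x i).1)%N in
  let D := (\max_(t <- f) mdeg t.1)%N in
  ((\sum_(t <- f) padic_res t.2 k * p ^ (M * D - \sum_(i < n) (x i).1 * t.1 i)
      * \prod_(i < n) padic_res (x i).2 k ^ t.1 i) %% p ^ k)%N.

Definition zpoly_vanishes_at (p n : nat) (f : zpoly p n) (x : 'I_n -> padic_num p) : Prop :=
  forall k, zpoly_qeval_res f x k = 0%N.

Definition padic_vec_zero (p n : nat) (x : 'I_n -> padic_num p) : Prop :=
  forall i k, padic_res (x i).2 k = 0%N.

Definition elliptic (p n : nat) (f : zpoly p n) (d : nat) : Prop :=
  [/\ (0 < d)%N,
      all (fun t => mdeg t.1 == d) f &
      forall x : 'I_n -> padic_num p, zpoly_vanishes_at f x <-> padic_vec_zero x].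

(* the fractional part {x . xi}_p for x in Q_p^n, xi in Z_p^n :
   with M = max m_i, x.xi = p^{-M} w, w = sum_i p^{M-m_i} y_i xi_i in Z_p,
   and {x.xi}_p = (w mod p^M) / p^M. *)
Definition dot_frac {R : realType} (p n : nat) (x : 'I_n -> padic_num p)
  (xi : 'I_n -> padic_int p) : R :=
  let M := (\max_(i < n) (x i).1)%N in
  ((\sum_(i < n) p ^ (M - (x i).1) * padic_res (x i).2 M * padic_res (xi i) M)
     %% p ^ M)%N%:R / (p%:R : R) ^+ M.

(* Psi(a) = exp(2 pi i {a}_p): real and imaginary parts *)
Definition Z0_integrand_re {R : realType} (p n : nat) (f : zpoly p n) (beta : R)
  (x : 'I_n -> padic_num p) (t : R) (xi : 'I_n -> padic_int p) : R :=
  cos (2 * pi * dot_frac x xi) *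
  expR (- t * (padic_abs_res p (zpoly_eval_res f xi) `^ beta)).

Definition Z0_integrand_im {R : realType} (p n : nat) (f : zpoly p n) (beta : R)
  (x : 'I_n -> padic_num p) (t : R) (xi : 'I_n -> padic_int p) : R :=
  sin (2 * pi * dot_frac x xi) *
  expR (- t * (padic_abs_res p (zpoly_eval_res f xi) `^ beta)).

(* Haar integral over Z_p^n (normalised: vol(Z_p^n) = 1) of a continuous g,
   as the limit of the Riemann sums over the grid {0,..,p^k-1}^n. *)
Definition haar_riemann_sum {R : realType} (p n : nat)
  (g : ('I_n -> padic_int p) -> R) (k : nat) : R :=
  (p%:R : R) ^- (k * n) *
  \sum_(a : {ffun 'I_n -> 'I_(p ^ k)}) g (fun i => pint_of_nat p (a i)).

Definition haar_integral_Zpn {R : realType} (p n : nat)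
  (g : ('I_n -> padic_int p) -> R) : R :=
  limn (haar_riemann_sum g).

Definition Z0_abs {R : realType} (p n : nat) (f : zpoly p n) (beta : R)
  (x : 'I_n -> padic_num p) (t : R) : R :=
  Num.sqrt (haar_integral_Zpn (Z0_integrand_re f beta x t) ^+ 2 +
            haar_integral_Zpn (Z0_integrand_im f beta x t) ^+ 2).

From mathcomp Require Import all_boot all_order all_algebra.
From mathcomp Require Import all_classical all_reals all_analysis.
From mathcomp Require Import ring lra zify.

(* Let [||x||_p = p^m] with [m > M], attained at the coordinate [i0], and split each Riemann
   sum of [Z_0] over [(Z/p^k)^n] along the ball [p^J Z_p^n], [J = m - M - 1]. Translating
   [xi_i0] by [p^J] multiplies the character [Psi(x . xi)] by a nontrivial root of unity, so
   the character sums to zero over the ball, which therefore contributes at most the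
   integral of [1 - e^(-t |f|^beta) <= t |f|^beta <= t p^(-J d beta)] over a set of volume
   [p^(-J n)]. Off the ball, [xi = p^j xi'] with [j < J] and [xi'] on the unit sphere; by
   homogeneity and the bound [|f| >= p^-M] on the sphere, [|f(xi)|_p] only depends on [xi']
   modulo [p^(M+1)], so it is invariant under translation of [xi_i0] by [p^(m-1)], which
   again rotates the character nontrivially: the sum off the ball vanishes. *)

Set Implicit Arguments. Unset Strict Implicit. Unset Printing Implicit Defensive.
Import Order.TTheory GRing.Theory Num.Theory numFieldNormedType.Exports.
Local Open Scope classical_set_scope.
Local Open Scope ring_scope.

Section Residues.
Local Open Scope nat_scope.

Lemma sum_modn_congr (I : Type) (r : seq I) (F G : I -> nat) q :
  (forall i, F i = G i %[mod q]) -> \sum_(i <- r) F i = \sum_(i <- r) G i %[mod q].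
Proof.
move=> FG; apply: (big_ind2 (fun x y => x = y %[mod q])) => // x1 x2 y1 y2 e1 e2.
by rewrite -modnDm e1 e2 modnDm.
Qed.

Lemma prod_modn_congr (I : Type) (r : seq I) (F G : I -> nat) q :
  (forall i, F i = G i %[mod q]) -> \prod_(i <- r) F i = \prod_(i <- r) G i %[mod q].
Proof.
move=> FG; apply: (big_ind2 (fun x y => x = y %[mod q])) => // x1 x2 y1 y2 e1 e2.
by rewrite -modnMm e1 e2 modnMm.
Qed.

Lemma eqn_modn_pmul2l c x y q : 0 < c ->
  c * x = c * y %[mod c * q] -> x = y %[mod q].
Proof. by move=> c_gt0; rewrite -!muln_modr => /eqP; rewrite eqn_pmul2l // => /eqP. Qed.

Variable p : nat.

Lemma padic_res0 (c : padic_int p) : padic_res c 0 = 0.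
Proof. by rewrite -(padic_res_compat c 0) expn0 modn1. Qed.

Hypothesis p_gt0 : 0 < p.

Lemma padic_res_mod (c : padic_int p) k l :
  l <= k -> padic_res c k %% p ^ l = padic_res c l.
Proof.
move=> lk; rewrite -(subnK lk); elim: (k - l) => [|e IH].
  by rewrite add0n modn_small // -(padic_res_compat c l) ltn_pmod // expn_gt0 p_gt0.
rewrite addSn -IH -(padic_res_compat c (e + l)).
by rewrite (modn_dvdm _ (dvdn_exp2l _ (leq_addl e l))).
Qed.

End Residues.

Definition homogeneous (p n : nat) (f : zpoly p n) (d : nat) : bool :=
  all (fun t => mdeg t.1 == d) f.

Section NatPointEvaluation.
Local Open Scope nat_scope.
Variables (p n : nat) (f : zpoly p n).

Definition zpoly_eval_nat (a : 'I_n -> nat) (k : nat) : nat :=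
  \sum_(t <- f) padic_res t.2 k * \prod_(i < n) a i ^ t.1 i.

Lemma zpoly_eval_nat_congr a b k q :
  (forall i, a i = b i %[mod q]) -> zpoly_eval_nat a k = zpoly_eval_nat b k %[mod q].
Proof.
move=> ab; apply: sum_modn_congr => t; rewrite -modnMmr.
rewrite (@prod_modn_congr _ _ _ (fun i => b i ^ t.1 i)) ?modnMmr // => i.
by rewrite -modnXm ab modnXm.
Qed.

Lemma zpoly_eval_res_nat a k :
  zpoly_eval_res f (fun i => pint_of_nat p (a i)) k = zpoly_eval_nat a k %% p ^ k.
Proof. by apply: (@zpoly_eval_nat_congr (fun i => a i %% p ^ k)) => i; rewrite modn_mod. Qed.

Lemma zpoly_eval_nat_homog d j a a' k : homogeneous f d ->
  (forall i, a i = p ^ j * a' i) -> zpoly_eval_nat a k = p ^ (j * d) * zpoly_eval_nat a' k.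
Proof.
rewrite /homogeneous /zpoly_eval_nat big_distrr /= => + aE.
elim: f => [|t g IH] /=; first by rewrite !big_nil.
move=> /andP[/eqP tdeg g_homog]; rewrite !big_cons IH // mulnCA; congr (_ * _ + _).
rewrite -tdeg /mdeg big_distrr expn_sum -big_split /=; apply: eq_bigr => i _.
by rewrite aE expnMn expnM.
Qed.

Hypothesis p_gt0 : 0 < p.

Lemma zpoly_eval_res_nat_mod a k l : l <= k ->
  zpoly_eval_res f (fun i => pint_of_nat p (a i)) k %% p ^ l =
  zpoly_eval_res f (fun i => pint_of_nat p (a i)) l.
Proof.
move=> lk; rewrite !zpoly_eval_res_nat (modn_dvdm _ (dvdn_exp2l _ lk)).
by apply: sum_modn_congr => t; rewrite -modnMml padic_res_mod // modnMml.
Qed.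

End NatPointEvaluation.

Section PadicAbs.
Variables (R : realType) (p : nat).
Local Notation pr := (p%:R : R).

Lemma eq_padic_abs_res (r s : nat -> nat) :
  (forall k, r k = 0%N <-> s k = 0%N) -> padic_abs_res (R:=R) p r = padic_abs_res p s.
Proof.
move=> rs; rewrite /padic_abs_res; congr (inf (_ @` _)).
by apply/seteqP; split => k /=; rewrite rs.
Qed.

Lemma padic_abs_res_le (r : nat -> nat) k : r k = 0%N -> padic_abs_res (R:=R) p r <= pr ^- k.
Proof.
move=> rk; apply: ge_inf; last by exists k.
by exists 0 => _ [l _ <-]; rewrite invr_ge0 exprn_ge0.
Qed.

Lemma padic_abs_res_ge0 (r : nat -> nat) : r 0%N = 0%N -> 0 <= padic_abs_res (R:=R) p r.
Proof.
move=> r0; apply: lb_le_inf; first by exists 1, 0%N; rewrite ?expr0 ?invr1.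
by move=> _ [k _ <-]; rewrite invr_ge0 exprn_ge0.
Qed.

Hypothesis p_gt1 : (1 < p)%N.

Lemma padic_abs_res_exact (r : nat -> nat) v :
  (forall k, r k = 0%N <-> (k <= v)%N) -> padic_abs_res (R:=R) p r = pr ^- v.
Proof.
move=> rv; apply/eqP; rewrite eq_le padic_abs_res_le ?rv //=.
apply: lb_le_inf; first by exists (pr ^- v), v => //; apply/rv.
move=> _ [k /rv kv <-]; rewrite lef_pV2 ?posrE ?exprn_gt0 ?ltr0n ?(ltn_trans _ p_gt1) //.
by rewrite ler_eXn2l // ltr1n.
Qed.

Lemma padic_abs_nat_unit (a : nat) :
  ~~ (p %| a)%N -> padic_abs_res (R:=R) p (padic_res (pint_of_nat p a)) = 1.
Proof.
move=> pNa; rewrite (@padic_abs_res_exact _ 0%N) ?expr0 ?invr1 // => -[|k] /=.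
  by rewrite expn0 modn1.
split=> // /eqP pk_a; case/negP: pNa.
by apply: dvdn_trans pk_a; rewrite dvdn_exp.
Qed.

Lemma padic_abs_int_cases (y : padic_int p) :
  (forall k, padic_res y k = 0%N) \/
  exists v, padic_res y v.+1 != 0%N /\ padic_abs_res (R:=R) p (padic_res y) = pr ^- v.
Proof.
have p_gt0 : (0 < p)%N by apply: ltn_trans p_gt1.
have [y_nz|y0] := pselect (exists k, padic_res y k != 0%N); last first.
  by left=> k; apply/eqP/negPn/negP => yk; apply: y0; exists k.
right; case: (ex_minnP y_nz) => -[|v]; first by rewrite padic_res0.
move=> yv minv; exists v; split=> //; apply: padic_abs_res_exact => k; split=> [yk|kv].
  rewrite leqNgt; apply/negP => vk.
  by move: yv; rewrite -(padic_res_mod p_gt0 y vk) yk mod0n.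
by apply/eqP; apply: contraTT kv => /minv; rewrite -ltnNge.
Qed.

End PadicAbs.

Definition sphere_lower_bound (R : realType) (p n : nat) (f : zpoly p n) (M : nat) : Prop :=
  forall xi : 'I_n -> padic_int p,
    (exists i, padic_abs_res p (padic_res (xi i)) = (1 : R)) ->
    (p%:R : R) ^- M <= padic_abs_res p (zpoly_eval_res f xi).

Section LocalConstancy.
Variables (R : realType) (p n d M : nat) (f : zpoly p n).
Hypotheses (p_gt1 : (1 < p)%N) (f_homog : homogeneous f d).
Local Notation pr := (p%:R : R).
Local Notation "|f ( a )|" :=
  (padic_abs_res (R:=R) p (zpoly_eval_res f (fun i => pint_of_nat p (a i)))).

Let p_gt0 : (0 < p)%N. Proof. exact: ltn_trans p_gt1. Qed.

Lemma zpoly_abs_le_dvd (a : 'I_n -> nat) j :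
  (forall i, p ^ j %| a i)%N -> |f(a)| <= pr ^- (j * d).
Proof.
move=> pj_a; apply: padic_abs_res_le => //.
rewrite zpoly_eval_res_nat
  (@zpoly_eval_nat_homog _ _ _ _ j _ (fun i => a i %/ p ^ j)%N _ f_homog).
  by apply/eqP; rewrite -/(dvdn _ _) dvdn_mulr.
by move=> i; rewrite mulnC divnK.
Qed.

Hypothesis f_sphere : sphere_lower_bound R f M.

(* The residues of [f(a)] and [f(b)] agree up to precision [N = j d + M + 1], while the
   sphere bound and homogeneity force the residue of [f(a)] at precision [N] to be nonzero. *)
Lemma zpoly_abs_loc_const (a b a' b' : 'I_n -> nat) j :
  (forall i, a i = p ^ j * a' i)%N -> (forall i, b i = p ^ j * b' i)%N ->
  (forall i, a' i = b' i %[mod p ^ M.+1])%N -> (exists i, ~~ (p %| a' i)%N) ->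
  |f(a)| = |f(b)|.
Proof.
move=> aE bE ab' [i0 a'_unit].
set N := (j * d + M.+1)%N.
have eq_le_N k : (k <= N)%N ->
    zpoly_eval_res f (fun i => pint_of_nat p (a i)) k =
    zpoly_eval_res f (fun i => pint_of_nat p (b i)) k.
  move=> kN; rewrite !zpoly_eval_res_nat.
  rewrite (zpoly_eval_nat_homog _ f_homog aE) (zpoly_eval_nat_homog _ f_homog bE).
  have e : (p ^ (j * d) * zpoly_eval_nat f a' k = p ^ (j * d) * zpoly_eval_nat f b' k
      %[mod p ^ N])%N.
    by rewrite /N expnD -!muln_modr (zpoly_eval_nat_congr f _ ab').
  by rewrite -(modn_dvdm _ (dvdn_exp2l p kN)) e (modn_dvdm _ (dvdn_exp2l p kN)).
have fa_N : zpoly_eval_res f (fun i => pint_of_nat p (a i)) N <> 0%N.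
  rewrite zpoly_eval_res_nat (zpoly_eval_nat_homog _ f_homog aE) /N expnD.
  move=> /eqP; rewrite -/(dvdn _ _) dvdn_pmul2l ?expn_gt0 ?p_gt0 // => fa'_dvd.
  have fa'0 : zpoly_eval_res f (fun i => pint_of_nat p (a' i)) M.+1 = 0%N.
    rewrite -(zpoly_eval_res_nat_mod f p_gt0 a' (leq_addl (j * d) M.+1)).
    by rewrite zpoly_eval_res_nat (modn_dvdm _ (dvdn_exp2l _ (leq_addl _ _))); apply/eqP.
  have a'_sphere : exists i,
      padic_abs_res p (padic_res (pint_of_nat p (a' i))) = (1 : R).
    by exists i0; rewrite padic_abs_nat_unit.
  have := le_trans (f_sphere a'_sphere) (padic_abs_res_le R p fa'0).
  by rewrite lef_pV2 ?posrE ?exprn_gt0 ?ltr0n // ler_eXn2l ?ltr1n // ltnn.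
have vanish_N (c : 'I_n -> nat) k : (N <= k)%N ->
    zpoly_eval_res f (fun i => pint_of_nat p (c i)) k = 0%N ->
    zpoly_eval_res f (fun i => pint_of_nat p (c i)) N = 0%N.
  by move=> Nk ck; rewrite -(zpoly_eval_res_nat_mod f p_gt0 c Nk) ck mod0n.
apply: eq_padic_abs_res => k; have [/eq_le_N -> //|/ltnW Nk] := leqP k N.
split=> /(vanish_N _ _ Nk); first by move/fa_N.
by rewrite -eq_le_N // => /fa_N.
Qed.

End LocalConstancy.

Section Rotations.
Variable R : realType.

Let two_pi_frac_divn (X Q : nat) : (0 < Q)%N ->
  2 * pi * (X%:R / Q%:R) = 2 * pi * ((X %% Q)%N%:R / Q%:R) + (pi *+ 2) *+ (X %/ Q)%N :> R.
Proof.
move=> Q_gt0; rewrite {1}(divn_eq X Q) natrD natrM -mulr_natr -[pi *+ 2]mulr_natr.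
by field; rewrite pnatr_eq0 -lt0n.
Qed.

Lemma cos_2pi_modn (X Q : nat) : (0 < Q)%N ->
  cos (2 * pi * ((X %% Q)%N%:R / Q%:R)) = cos (2 * pi * (X%:R / Q%:R)) :> R.
Proof. by move=> Q_gt0; rewrite (two_pi_frac_divn X Q_gt0) (periodicn (@cosD2pi R)). Qed.

Lemma sin_2pi_modn (X Q : nat) : (0 < Q)%N ->
  sin (2 * pi * ((X %% Q)%N%:R / Q%:R)) = sin (2 * pi * (X%:R / Q%:R)) :> R.
Proof. by move=> Q_gt0; rewrite (two_pi_frac_divn X Q_gt0) (periodicn (@sinD2pi R)). Qed.

Lemma cos_2pi_frac_neq1 (c Q : nat) : (0 < c < Q)%N ->
  cos (2 * pi * (c%:R / Q%:R)) != 1 :> R.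
Proof.
case/andP=> c_gt0 cQ; pose y : R := pi * (c%:R / Q%:R).
have Q_gt0 : (0 < Q)%N := ltn_trans c_gt0 cQ.
have c_Q0 : 0 < (c%:R / Q%:R : R) by rewrite divr_gt0 ?ltr0n.
have c_Q1 : (c%:R / Q%:R : R) < 1 by rewrite ltr_pdivrMr ?ltr0n // mul1r ltr_nat.
have y_bounds : 0 < y < pi.
  by rewrite mulr_gt0 ?pi_gt0 //= -[X in _ < X]mulr1 ltr_pM2l // pi_gt0.
have -> : 2 * pi * (c%:R / Q%:R) = y *+ 2 by rewrite /y; ring.
rewrite cos_mulr2n cos2sin2; apply/eqP => cos_2y.
have : sin y ^+ 2 = 0 by lra.
by apply/eqP; rewrite expf_eq0 /= gt_eqF ?sin_gt0_pi.
Qed.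

(* Reindexing by [tau] multiplies [\sum_(a | D a) e^(i theta a) w a] by [e^(i phi) <> 1]. *)
Lemma sum_rotated_eq0 (T : finType) (tau : T -> T) (D : pred T) (theta w : T -> R) phi :
  injective tau -> (forall a, D (tau a) = D a) -> cos phi != 1 ->
  (forall a, cos (theta (tau a)) = cos (theta a + phi)) ->
  (forall a, sin (theta (tau a)) = sin (theta a + phi)) ->
  (forall a, D a -> w (tau a) = w a) ->
  \sum_(a | D a) cos (theta a) * w a = 0 /\ \sum_(a | D a) sin (theta a) * w a = 0.
Proof.
move=> tau_inj D_tau cos_phi cos_tau sin_tau w_tau.
set Sc := \sum_(a | D a) _; set Ss := \sum_(a | D a) _.
set c := cos phi; set s := sin phi.
have eSc : Sc = c * Sc - s * Ss.
  rewrite {1}/Sc (reindex_inj tau_inj) /= (eq_bigl D) // /Sc /Ss !mulr_sumr -sumrB.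
  by apply: eq_bigr => a Da; rewrite cos_tau w_tau // cosD /c /s; ring.
have eSs : Ss = s * Sc + c * Ss.
  rewrite {1}/Ss (reindex_inj tau_inj) /= (eq_bigl D) // /Sc /Ss !mulr_sumr -big_split /=.
  by apply: eq_bigr => a Da; rewrite sin_tau w_tau // sinD /c /s; ring.
have cs : c ^+ 2 + s ^+ 2 = 1 by rewrite cos2Dsin2.
have c_neq1 : 2 - 2 * c != 0.
  by apply: contra cos_phi; rewrite -/c => /eqP c1; apply/eqP; lra.
have E1 : (1 - c) * Sc + s * Ss = 0 by rewrite mulrBl mul1r {1}eSc; ring.
have E2 : (1 - c) * Ss - s * Sc = 0 by rewrite mulrBl mul1r {1}eSs; ring.
have system_eq0 X Y : (1 - c) * X + s * Y = 0 -> (1 - c) * Y - s * X = 0 -> X = 0.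
  move=> e1 e2; apply/eqP; rewrite -(mulrI_eq0 _ (lregP c_neq1)); apply/eqP.
  have -> : (2 - 2 * c) * X = (1 - c) * ((1 - c) * X + s * Y) - s * ((1 - c) * Y - s * X)
    - (c ^+ 2 + s ^+ 2 - 1) * X by ring.
  by rewrite e1 e2 cs; ring.
split; first exact: system_eq0 E1 E2.
by apply: (system_eq0 _ (- Sc)); [rewrite mulrN -E2 | rewrite mulrN -oppr0 -E1]; ring.
Qed.

Lemma norm_sum_le_defect (T : finType) (D : pred T) (c w : T -> R) :
  (forall a, `|c a| <= 1) -> (forall a, 0 <= 1 - w a) ->
  \sum_(a | D a) c a = 0 -> \sum_(a | ~~ D a) c a * w a = 0 ->
  `|\sum_a c a * w a| <= \sum_(a | D a) (1 - w a).
Proof.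
move=> c_le1 w_le1 sum_in sum_out; rewrite (bigID D) /= sum_out addr0.
have -> : \sum_(a | D a) c a * w a = \sum_(a | D a) c a - \sum_(a | D a) c a * (1 - w a).
  by rewrite -sumrB; apply: eq_bigr => a _; ring.
rewrite sum_in sub0r normrN; apply: le_trans (ler_norm_sum _ _ _) _.
apply: ler_sum => a _; rewrite normrM (ger0_norm (w_le1 a)).
by rewrite -[X in _ <= X]mul1r ler_wpM2r.
Qed.

End Rotations.

(* [x . a = dot_num x a / p^L] modulo [Z_p], where [L] is the largest [m_i] among the
   coordinates [x_i = p^-m_i y_i] of [x]. *)
Definition dot_num (p n : nat) (x : 'I_n -> padic_num p) (a : 'I_n -> nat) : nat :=
  let L := (\max_(i < n) (x i).1)%N in
  (\sum_(i < n) p ^ (L - (x i).1) * padic_res (x i).2 L * (a i %% p ^ L))%N.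

Section Grid.
Local Open Scope nat_scope.

Lemma modn_mulDr_shift K a u r Q :
  (K * ((a + u) %% Q) + r) %% Q = ((K * (a %% Q) + r) %% Q + K * u) %% Q.
Proof.
have reduce X Y : (K * (X %% Q) + Y) %% Q = (K * X + Y) %% Q.
  by rewrite -modnDml modnMmr modnDml.
by rewrite reduce modnDml -addnA reduce mulnDr addnA addnAC.
Qed.

Lemma card_dvdn_ord (d e : nat) : 0 < d -> #|[pred x : 'I_(d * e) | d %| x]| = e.
Proof.
move=> d_gt0; have lt_de (y : 'I_e) : y * d < d * e by rewrite mulnC ltn_pmul2l.
pose g (y : 'I_e) : 'I_(d * e) := Ordinal (lt_de y).
have g_inj : injective g.
  by move=> y y' /(congr1 val) /= /eqP; rewrite eqn_pmul2r // => /eqP /val_inj.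
rewrite -[RHS]card_ord -(fintype.card_image g_inj 'I_e); apply: eq_card => x; rewrite inE.
apply/idP/fintype.imageP => [d_x|[y _ ->] /=]; last by rewrite dvdn_mull.
have x_lt : x %/ d < e by rewrite ltn_divLR // [e * d]mulnC.
by exists (Ordinal x_lt) => //; apply: val_inj => /=; rewrite divnK.
Qed.

Variables (p k n : nat).
Local Notation grid := {ffun 'I_n -> 'I_(p ^ k)}.

Definition grid_ball (j : nat) (a : grid) : bool := [forall i, p ^ j %| a i].

Definition grid_shift (i0 : 'I_n) (u : nat) (a : grid) : grid :=
  [ffun i => if i == i0 then insubd (a i) ((a i + u) %% p ^ k) else a i].

Hypothesis p_gt0 : 0 < p.

Lemma card_grid_ball j : j <= k -> #|[pred a : grid | grid_ball j a]| = (p ^ (k - j)) ^ n.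
Proof.
move=> jk; rewrite -[in RHS](card_ord n).
rewrite -(@card_dvdn_ord (p ^ j) (p ^ (k - j))) ?expn_gt0 ?p_gt0 // -card_ffun_on.
by rewrite -expnD (subnKC jk); apply: eq_card => a; rewrite !inE.
Qed.

Lemma grid_shift_val i0 u a i :
  grid_shift i0 u a i = (if i == i0 then (a i + u) %% p ^ k else a i) :> nat.
Proof.
by rewrite ffunE; case: eqP => // _; rewrite val_insubd ltn_pmod ?expn_gt0 ?p_gt0.
Qed.

Lemma grid_shift_inj i0 u : injective (grid_shift i0 u).
Proof.
move=> a b /ffunP ab; apply/ffunP => i; apply: ord_inj.
move/(congr1 (@nat_of_ord _)): (ab i).
rewrite !grid_shift_val; case: eqP => // _ /eqP; rewrite eqn_modDr => /eqP.
by rewrite !modn_small.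
Qed.

Lemma grid_ball_shift i0 u j a : j <= k -> p ^ j %| u ->
  grid_ball j (grid_shift i0 u a) = grid_ball j a.
Proof.
move=> jk j_u; apply: eq_forallb => i; rewrite grid_shift_val; case: eqP => // _.
by rewrite /dvdn (modn_dvdm _ (dvdn_exp2l _ jk)) -/(dvdn _ _) dvdn_addl.
Qed.

Lemma dot_num_shift (x : 'I_n -> padic_num p) i0 u a :
  let L := \max_(i < n) (x i).1 in L <= k ->
  dot_num x (fun i => grid_shift i0 u a i) %% p ^ L =
  (dot_num x (fun i => a i) %% p ^ L + p ^ (L - (x i0).1) * padic_res (x i0).2 L * u) %% p ^ L.
Proof.
move=> L Lk; rewrite /dot_num -/L (bigD1 i0) // [in RHS](bigD1 i0) //= grid_shift_val eqxx.
rewrite (modn_dvdm _ (dvdn_exp2l p Lk)) -modn_mulDr_shift; congr ((_ + _) %% _).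
by apply: eq_bigr => i /negbTE i_i0; rewrite grid_shift_val i_i0.
Qed.

End Grid.

Section RealFacts.
Variable R : realType.

Lemma powR_exprn (a e : R) m : 0 <= a -> (a ^+ m) `^ e = (a `^ e) ^+ m.
Proof.
move=> a_ge0; rewrite -powR_mulrn // -powRrM mulrC powRrM powR_mulrn //.
exact: powR_ge0.
Qed.

Lemma powR_invn_mul (a beta : R) (j d : nat) : 0 < a ->
  (a ^- (j * d)) `^ beta = (a `^ (- (d%:R * beta))) ^+ j.
Proof.
move=> a_gt0; rewrite -powR_invn ?ltW // -powRrM -powR_mulrn ?powR_ge0 // -powRrM.
by congr (_ `^ _); rewrite natrM; ring.
Qed.

Lemma powR_subn (a b : R) n : 0 < a -> a `^ (- b - n%:R) = a `^ (- b) / a ^+ n.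
Proof.
move=> a_gt0; rewrite powRD; last by rewrite implybE (gt_eqF a_gt0) orbT.
by rewrite powR_invn ?ltW.
Qed.

Lemma onem_expRN_le (x : R) : 1 - expR (- x) <= x.
Proof. by have := expR_ge1Dx (- x); lra. Qed.

(* [0 <= B] covers a divergent [u], whose [limn] is the default value [0]. *)
Lemma norm_limn_le (u : nat -> R) B N : 0 <= B ->
  (forall k, (N <= k)%N -> `|u k| <= B) -> `|limn u| <= B.
Proof.
move=> B_ge0 uB; have [u_cvg|u_div] := pselect (cvgn u); last first.
  suff -> : limn u = point by rewrite normr0.
  by apply/eqP; apply: contrapT => /negP lim_u; apply: u_div; exact: cvgNpoint.
have u_le : \forall k \near \oo, u k <= B.
  by exists N => // k /uB; apply: le_trans; exact: ler_norm.
have u_ge : \forall k \near \oo, - B <= u k.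
  by exists N => // k /uB; rewrite ler_norml => /andP[].
by rewrite ler_norml (closed_cvg _ (@closed_le R B) u_le _ u_cvg)
  (closed_cvg _ (@closed_ge R (- B)) u_ge _ u_cvg).
Qed.

Lemma sqrt_sum_sqr_le (a b B : R) :
  `|a| <= B -> `|b| <= B -> Num.sqrt (a ^+ 2 + b ^+ 2) <= 2 * B.
Proof.
move=> aB bB; have B_ge0 : 0 <= B := le_trans (normr_ge0 a) aB.
rewrite -(ger0_norm (_ : 0 <= 2 * B)) ?mulr_ge0 // -sqrtr_sqr ler_sqrt ?sqr_ge0 //.
by move: aB bB; rewrite !ler_norml => /andP[? ?] /andP[? ?]; nra.
Qed.

End RealFacts.

Lemma exists_switch (P : pred nat) J :
  P 0%N -> ~~ P J -> exists2 j, (j < J)%N & P j && ~~ P j.+1.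
Proof.
elim: J => [->//|J IH] P0 nPJ; have [PJ|nPJ'] := boolP (P J); first by exists J; rewrite ?PJ.
by have [j jJ Pj] := IH P0 nPJ'; exists j => //; apply: ltnW.
Qed.

Section RiemannSumEstimate.
Variables (R : realType) (p n d M : nat) (beta t : R) (f : zpoly p n).
Variables (x : 'I_n -> padic_num p) (i0 : 'I_n) (m v k : nat).
Hypotheses (p_prime : prime p) (beta_gt0 : 0 < beta) (t_gt0 : 0 < t).
Hypotheses (f_homog : homogeneous f d) (f_sphere : sphere_lower_bound R f M).
Hypotheses (xi0_res : padic_res (x i0).2 v.+1 != 0%N) (xi0_exp : (x i0).1 = (m + v)%N).
Hypotheses (M_lt_m : (M < m)%N) (L_le_k : (\max_(i < n) (x i).1 <= k)%N) (m_le_k : (m <= k)%N).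

Local Notation pr := (p%:R : R).
Local Notation grid := {ffun 'I_n -> 'I_(p ^ k)}.
Let L := (\max_(i < n) (x i).1)%N.
Let J := (m - M.+1)%N.
Let rho := pr `^ (- (d%:R * beta) - n%:R).
Let p_gt0 : (0 < p)%N := prime_gt0 p_prime.
Let p_gt1 : (1 < p)%N := prime_gt1 p_prime.

Let theta (a : grid) : R := 2 * pi * dot_frac x (fun i => pint_of_nat p (a i)).
Let weight (a : grid) : R :=
  expR (- t * padic_abs_res p (zpoly_eval_res f (fun i => pint_of_nat p (a i))) `^ beta).
Let phi (u : nat) : R :=
  2 * pi * ((p ^ (L - (x i0).1) * padic_res (x i0).2 L * u)%N%:R / (p ^ L)%N%:R).

Lemma theta_shift u a :
  cos (theta (grid_shift i0 u a)) = cos (theta a + phi u) /\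
  sin (theta (grid_shift i0 u a)) = sin (theta a + phi u).
Proof.
have pL_gt0 : (0 < p ^ L)%N by rewrite expn_gt0 p_gt0.
have theta_num b :
    theta b = 2 * pi * ((dot_num x (fun i => b i) %% p ^ L)%N%:R / (p ^ L)%N%:R).
  by rewrite /theta /dot_frac natrX.
rewrite !theta_num (dot_num_shift p_gt0 i0 u a L_le_k) cos_2pi_modn // sin_2pi_modn //.
by rewrite natrD -mulrDr -mulrDl.
Qed.

Lemma phase_num_ndvd s : (s < m)%N ->
  ~~ (p ^ L %| p ^ (L - (x i0).1) * padic_res (x i0).2 L * p ^ s)%N.
Proof.
move=> s_lt_m; have xi0_le_L : ((x i0).1 <= L)%N.
  exact: (@leq_bigmax _ (fun i => (x i).1) i0).
rewrite mulnAC -expnD -{1}(@subnKC (L - (x i0).1 + s) L); last by lia.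
rewrite expnD dvdn_pmul2l ?expn_gt0 ?p_gt0 //; apply: contra xi0_res => dvd_res.
rewrite -(padic_res_mod p_gt0 _ (_ : v.+1 <= L)%N); last by lia.
by rewrite /dvdn in dvd_res *; apply: dvdn_trans dvd_res; apply: dvdn_exp2l; lia.
Qed.

Lemma cos_phi_neq1 s : (s < m)%N -> cos (phi (p ^ s)) != 1.
Proof.
move=> s_lt_m; rewrite /phi -cos_2pi_modn ?expn_gt0 ?p_gt0 //.
by apply: cos_2pi_frac_neq1; rewrite lt0n ltn_pmod ?expn_gt0 ?p_gt0 // andbT phase_num_ndvd.
Qed.

Lemma abs_f_shift (a : grid) : ~~ grid_ball J a ->
  padic_abs_res (R:=R) p
    (zpoly_eval_res f (fun i => pint_of_nat p (grid_shift i0 (p ^ m.-1) a i))) =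
  padic_abs_res p (zpoly_eval_res f (fun i => pint_of_nat p (a i))).
Proof.
move=> a_out.
have ball0 : grid_ball 0 a by apply/forallP => i; rewrite expn0 dvd1n.
have [j j_J /andP[a_j a_nj]] := exists_switch (P := fun j => grid_ball j a) ball0 a_out.
have /forallP sa_j : grid_ball j (grid_shift i0 (p ^ m.-1) a).
  by rewrite grid_ball_shift // ?dvdn_exp2l; lia.
move/forallP: a_j => a_j; move/forallPn: a_nj => [i1 a_i1].
apply/esym/(zpoly_abs_loc_const p_gt1 f_homog f_sphere (j := j)
  (a' := fun i => (a i %/ p ^ j)%N)
  (b' := fun i => (grid_shift i0 (p ^ m.-1) a i %/ p ^ j)%N)).
- by move=> i; rewrite mulnC divnK.
- by move=> i; rewrite mulnC divnK.
- move=> i; have dvd_M : (p ^ M.+1 %| p ^ (m.-1 - j))%N by apply: dvdn_exp2l; lia.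
  rewrite -(modn_dvdm _ dvd_M) -[RHS](modn_dvdm _ dvd_M); congr (_ %% _)%N.
  apply: (@eqn_modn_pmul2l (p ^ j)); first by rewrite expn_gt0 p_gt0.
  rewrite -expnD subnKC; last by lia.
  rewrite ![(p ^ j * _)%N]mulnC !divnK // (grid_shift_val p_gt0); case: ifP => // _.
  by rewrite (modn_dvdm _ (dvdn_exp2l p (_ : m.-1 <= k)%N)) ?modnDr //; lia.
- exists i1; apply: contra a_i1 => p_a1.
  by rewrite -(divnK (a_j i1)) expnS dvdn_pmul2r ?expn_gt0 ?p_gt0.
Qed.

Lemma weight_shift a : ~~ grid_ball J a -> weight (grid_shift i0 (p ^ m.-1) a) = weight a.
Proof. by move=> a_out; rewrite /weight abs_f_shift. Qed.

Lemma sum_ball_defect_le :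
  \sum_(a | grid_ball J a) (1 - weight a) <= t * pr ^+ (k * n) * rho ^+ J.
Proof.
have pr_gt0 : 0 < pr by rewrite ltr0n.
set q := pr `^ (- (d%:R * beta)).
have defect_le a : grid_ball J a -> 1 - weight a <= t * q ^+ J.
  move=> /forallP a_J; rewrite /weight mulNr; apply: le_trans (onem_expRN_le _) _.
  rewrite ler_pM2l // /q -powR_invn_mul //; apply: ge0_ler_powR; first exact: ltW.
  - by rewrite nnegrE padic_abs_res_ge0 // /zpoly_eval_res expn0 modn1.
  - by rewrite nnegrE invr_ge0 exprn_ge0 // ltW.
  - exact: zpoly_abs_le_dvd.
have J_le_k : (J <= k)%N by rewrite /J; lia.
apply: le_trans (ler_sum _ defect_le) _; rewrite sumr_const.
rewrite (eq_card (B := [pred a : grid | grid_ball J a])) // card_grid_ball //.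
suff -> : (t * q ^+ J) *+ (p ^ (k - J)) ^ n = t * pr ^+ (k * n) * rho ^+ J by [].
rewrite -(mulr_natl (t * q ^+ J)) /rho powR_subn // -/q -expnM natrX exprMn exprVn -exprM.
have -> : (k * n = (k - J) * n + n * J)%N.
  by rewrite mulnC [((k - J) * n)%N]mulnC -mulnDr subnK.
by rewrite exprD; field; rewrite expf_neq0 // gt_eqF.
Qed.

Lemma riemann_sum_Z0_le :
  `|haar_riemann_sum (Z0_integrand_re f beta x t) k| <= t * rho ^+ J /\
  `|haar_riemann_sum (Z0_integrand_im f beta x t) k| <= t * rho ^+ J.
Proof.
have J_lt_m : (J < m)%N by rewrite /J; lia.
have J_le_k : (J <= k)%N by lia.
have J_le_m1 : (J <= m.-1)%N by lia.
have m1_lt_m : (m.-1 < m)%N by lia.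
have [in_cos in_sin] := sum_rotated_eq0 (D := grid_ball J) (w := fun=> 1)
  (@grid_shift_inj _ _ _ p_gt0 i0 (p ^ J))
  (fun a => grid_ball_shift p_gt0 i0 a J_le_k (dvdnn _))
  (cos_phi_neq1 J_lt_m) (fun a => (theta_shift _ a).1) (fun a => (theta_shift _ a).2)
  (fun _ _ => erefl).
have [out_cos out_sin] := sum_rotated_eq0 (D := fun a => ~~ grid_ball J a)
  (@grid_shift_inj _ _ _ p_gt0 i0 (p ^ m.-1))
  (fun a => congr1 negb (grid_ball_shift p_gt0 i0 a J_le_k (dvdn_exp2l p J_le_m1)))
  (cos_phi_neq1 m1_lt_m) (fun a => (theta_shift _ a).1) (fun a => (theta_shift _ a).2)
  weight_shift.
have weight_le1 a : 0 <= 1 - weight a.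
  by rewrite subr_ge0 /weight expR_le1 mulNr oppr_le0 mulr_ge0 ?powR_ge0 ?ltW.
have sum_mulr1 (g : grid -> R) :
    \sum_(a | grid_ball J a) g a * 1 = \sum_(a | grid_ball J a) g a.
  by apply: eq_bigr => a _; rewrite mulr1.
have riemann_bound (c : grid -> R) : (forall a, `|c a| <= 1) ->
    \sum_(a | grid_ball J a) c a = 0 -> \sum_(a | ~~ grid_ball J a) c a * weight a = 0 ->
    `|pr ^- (k * n) * \sum_a c a * weight a| <= t * rho ^+ J.
  move=> c_le1 c_in c_out; rewrite normrM ger0_norm ?invr_ge0 ?exprn_ge0 ?ler0n //.
  rewrite mulrC ler_pdivrMr ?exprn_gt0 ?ltr0n ?prime_gt0 //.
  apply: le_trans (norm_sum_le_defect c_le1 weight_le1 c_in c_out) _.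
  by rewrite mulrAC; exact: sum_ball_defect_le.
split.
  apply: (riemann_bound (fun a => cos (theta a))) => // [a|]; first exact: cos_max.
  by rewrite -sum_mulr1.
apply: (riemann_bound (fun a => sin (theta a))) => // [a|]; first exact: sin_max.
by rewrite -sum_mulr1.
Qed.

End RiemannSumEstimate.

Lemma Z0_abs_le (R : realType) (p n d M : nat) (beta t : R) (f : zpoly p n)
    (x : 'I_n -> padic_num p) (i0 : 'I_n) (m v : nat) :
  prime p -> 0 < beta -> 0 < t -> homogeneous f d -> sphere_lower_bound R f M ->
  padic_res (x i0).2 v.+1 != 0%N -> (x i0).1 = (m + v)%N -> (M < m)%N ->
  Z0_abs f beta x t <= 2 * (t * ((p%:R : R) `^ (- (d%:R * beta) - n%:R)) ^+ (m - M.+1)).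
Proof.
move=> p_prime beta_gt0 t_gt0 f_homog f_sphere xi0_res xi0_exp M_lt_m.
set B := t * _ ^+ _; have B_ge0 : 0 <= B by rewrite mulr_ge0 ?exprn_ge0 ?powR_ge0 ?ltW.
have riemann_le k : (maxn (\max_(i < n) (x i).1) m <= k)%N ->
    `|haar_riemann_sum (Z0_integrand_re f beta x t) k| <= B /\
    `|haar_riemann_sum (Z0_integrand_im f beta x t) k| <= B.
  rewrite geq_max => /andP[L_le_k m_le_k].
  exact: (riemann_sum_Z0_le p_prime beta_gt0 t_gt0 f_homog f_sphere xi0_res xi0_exp
    M_lt_m L_le_k m_le_k).
have lim_le := norm_limn_le (N := maxn (\max_(i < n) (x i).1) m) B_ge0.
by apply: sqrt_sum_sqr_le; apply: lim_le => k /riemann_le[].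
Qed.

Lemma padic_vnorm_attained (R : realType) (p n : nat) (x : 'I_n -> padic_num p) :
  padic_vnorm (R:=R) x = 0 \/ exists i, padic_vnorm (R:=R) x = padic_abs_num (R:=R) (x i).
Proof.
apply: (big_ind (fun r => r = 0 \/ exists i, r = padic_abs_num (x i))) => [|r s|i _].
- by left.
- by rewrite /Num.max; case: ifP.
- by right; exists i.
Qed.

Lemma padic_vnorm_ge_exp (R : realType) (p n e : nat) (x : 'I_n -> padic_num p) :
  (1 < p)%N -> (p%:R : R) ^+ e <= padic_vnorm (R:=R) x ->
  exists i0 m v, [/\ (e <= m)%N, (x i0).1 = (m + v)%N, padic_res (x i0).2 v.+1 != 0%N &
                     padic_vnorm (R:=R) x = (p%:R : R) ^+ m].
Proof.
move=> p_gt1 x_ge; set pr := (p%:R : R).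
have pr_gt1 : 1 < pr by rewrite ltr1n.
have pr_gt0 : 0 < pr := lt_trans ltr01 pr_gt1.
have [x0|[i0 xE]] := padic_vnorm_attained R x.
  by move: x_ge; rewrite x0 leNgt exprn_gt0.
have [y0|[v [yv yE]]] := padic_abs_int_cases R p_gt1 (x i0).2.
  have y_small := padic_abs_res_le R p (y0 ((x i0).1 + e.+1)%N).
  have : pr ^+ e <= pr ^- e.+1.
    apply: (le_trans x_ge); rewrite xE /padic_abs_num.
    apply: le_trans (ler_wpM2l (exprn_ge0 _ (ltW pr_gt0)) y_small) _.
    by rewrite exprD invfM mulrA mulfV ?mul1r ?expf_neq0 ?gt_eqF.
  rewrite leNgt => /negP[]; apply: (@lt_le_trans _ _ 1); last exact: exprn_ege1 (ltW pr_gt1).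
  by rewrite invf_lt1 ?exprn_gt0 ?exprn_egt1.
have vx : padic_vnorm (R:=R) x = pr ^+ (x i0).1 / pr ^+ v by rewrite xE /padic_abs_num yE.
have e_v : (e + v <= (x i0).1)%N.
  by rewrite -(ler_eXn2l pr_gt1) exprD -ler_pdivlMr ?exprn_gt0 // -vx.
exists i0, ((x i0).1 - v)%N, v; split => //; first by lia.
  by rewrite subnK //; lia.
by rewrite vx -{1}(@subnK v (x i0).1) ?exprD ?mulfK ?expf_neq0 ?gt_eqF //; lia.
Qed.

Theorem lemma4 (R : realType) (p n d M : nat) (beta : R) (f : zpoly p n) :
  prime p -> (1 <= n)%N -> 0 < beta -> elliptic f d -> (0 < M)%N ->
  (forall xi : 'I_n -> padic_int p,
      (exists i, padic_abs_res p (padic_res (xi i)) = (1 : R)) ->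
      (p%:R : R) ^- M <= padic_abs_res p (zpoly_eval_res f xi)) ->
  exists Rc C : R, 0 < Rc /\ 0 < C /\
    forall (x : 'I_n -> padic_num p) (t : R),
      Rc <= padic_vnorm (R:=R) x -> 0 < t ->
      (p%:R : R) `^ (M.+1%:R * d%:R * beta) * t *
        padic_vnorm (R:=R) x `^ (- (d%:R * beta)) <= 1 ->
      Z0_abs f beta x t <= C * t * padic_vnorm (R:=R) x `^ (- (d%:R * beta) - n%:R).
Proof.
move=> p_prime _ beta_gt0 [_ f_homog _] _ f_sphere.
set pr := (p%:R : R); set rho := pr `^ (- (d%:R * beta) - n%:R).
have pr_gt0 : 0 < pr by rewrite ltr0n prime_gt0.
have rho_gt0 : 0 < rho by apply: powR_gt0.
exists (pr ^+ M.+1), (2 / rho ^+ M.+1); split; first exact: exprn_gt0.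
split; first by rewrite divr_gt0 // exprn_gt0.
move=> x t x_large t_gt0 _.
have [i0 [m [v [M_lt_m xi0_exp xi0_res ->]]]] :=
  padic_vnorm_ge_exp (prime_gt1 p_prime) x_large.
apply: le_trans (Z0_abs_le p_prime beta_gt0 t_gt0 f_homog f_sphere xi0_res xi0_exp M_lt_m) _.
rewrite powR_exprn ?ler0n // -/rho.
suff -> : 2 / rho ^+ M.+1 * t * rho ^+ m = 2 * (t * rho ^+ (m - M.+1)) by [].
by rewrite -{1}(subnK M_lt_m) exprD; field; rewrite expf_neq0 // gt_eqF.
Qed.
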